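(* Let $k\ge 1$ and assume that the block residuals $R_0,\dots,R_{k-1}$ produced by the BCG algorithm all have full column rank, so that all quantities up to $X_k,R_k$ are well defined. Then $$\mathfrak{E}_{k-1}=\Theta_{k-1}+\mathfrak{E}_{k},$$ and the matrix $\Theta_{k-1}=(R_{k-1}^TR_{k-1})\Upsilon_{k-1}$ is symmetric and positive definite. In particular, for each $i=1,\dots,m$, $$\|x^{(i)}-x^{(i)}_{k-1}\|_A^2=(\Theta_{k-1})_{i,i}+\|x^{(i)}-x^{(i)}_{k}\|_A^2\ \ge\ (\Theta_{k-1})_{i,i}>0,$$ where $x^{(i)}$ and $x^{(i)}_j$ denote the $i$th columns of $X$ and $X_j$.
   Context: Let $A\in\mathbb{R}^{n\times n}$ be symmetric positive definite, let $B,X_0\in\mathbb{R}^{n\times m}$, and let $X=A^{-1}B$. The block conjugate gradient (BCG) algorithm sets $R_0=B-AX_0$, $P_0=R_0$, and for $k=1,2,\dots$: $\Upsilon_{k-1}=(P_{k-1}^TAP_{k-1})^{-1}(R_{k-1}^TR_{k-1})$, $X_k=X_{k-1}+P_{k-1}\Upsilon_{k-1}$, $R_k=R_{k-1}-AP_{k-1}\Upsilon_{k-1}$, $\Xi_k=(R_{k-1}^TR_{k-1})^{-1}(R_k^TR_k)$, $P_k=R_k+P_{k-1}\Xi_k$. Define $\mathfrak{E}_k=(X-X_k)^TA(X-X_k)$ and $\Theta_k=(R_k^TR_k)\Upsilon_k$. For a vector $y$, $\|y\|_A=(y^TAy)^{1/2}$. *)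

From HB Require Import structures.
From mathcomp Require Import all_boot all_order all_algebra.
Set Implicit Arguments. Unset Strict Implicit. Unset Printing Implicit Defensive.
Import Order.TTheory GRing.Theory Num.Theory.
Local Open Scope ring_scope.

Section BCG.
Variable R : realFieldType.

Definition spd (p : nat) (M : 'M[R]_p) : Prop :=
  M^T = M /\ forall v : 'cV[R]_p, v != 0 -> 0 < (v^T *m M *m v) 0 0.

Variables (n m : nat) (A : 'M[R]_n) (B X0 : 'M[R]_(n, m)).

Definition bcg_step (s : 'M[R]_(n, m) * 'M[R]_(n, m) * 'M[R]_(n, m)) :=
  let: (Xk, Rk, Pk) := s in
  let Ups := invmx (Pk^T *m A *m Pk) *m (Rk^T *m Rk) in
  let Xk' := Xk + Pk *m Ups in
  let Rk' := Rk - A *m Pk *m Ups in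
  let Xi := invmx (Rk^T *m Rk) *m (Rk'^T *m Rk') in
  let Pk' := Rk' + Pk *m Xi in
  (Xk', Rk', Pk').

Definition bcg_state (k : nat) :=
  iter k bcg_step (X0, B - A *m X0, B - A *m X0).

Definition bcgX k := (bcg_state k).1.1.
Definition bcgR k := (bcg_state k).1.2.
Definition bcgP k := (bcg_state k).2.

Definition bcgUps k :=
  invmx ((bcgP k)^T *m A *m bcgP k) *m ((bcgR k)^T *m bcgR k).

Definition bcgTheta k := ((bcgR k)^T *m bcgR k) *m bcgUps k.

Definition bcgXsol := invmx A *m B.

Definition bcgErr k :=
  (bcgXsol - bcgX k)^T *m A *m (bcgXsol - bcgX k).

End BCG.

Definition Anorm2 (R : realFieldType) (n : nat) (A : 'M[R]_n) (y : 'cV[R]_n) : R :=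
  (y^T *m A *m y) 0 0.

From HB Require Import structures.
From mathcomp Require Import all_boot all_order all_algebra.
Import Order.TTheory GRing.Theory Num.Theory.
Local Open Scope ring_scope.
Set Implicit Arguments. Unset Strict Implicit.

(* With S := R_j^T R_j and G := P_j^T A P_j, the BCG recurrences give A (X - X_j) = R_j
   and the Galerkin identity P_j^T R_j = S.  The correction D := P_j Upsilon_j = P_j G^-1 S
   then satisfies E_j^T A D = D^T A E_j = D^T A D = S G^-1 S = Theta_j, so expanding
   E_{j+1} = (E_j - D)^T A (E_j - D) gives E_j = Theta_j + E_{j+1}.  Full column rank
   of R_j makes S, hence P_j, hence G of rank m; so G^-1 is positive definite and so is
   its congruence S G^-1 S, whose diagonal entries are then positive. *)

Section PositiveDefinite.
Variable R : realFieldType.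

Lemma tr_mul_self_gt0 p (w : 'cV[R]_p) : w != 0 -> 0 < (w^T *m w) 0 0.
Proof.
move=> w_neq0; have sq_ge0 k : xpredT k -> 0 <= w^T 0 k * w k 0.
  by rewrite !mxE -expr2 sqr_ge0.
rewrite !mxE lt_def sumr_ge0 ?andbT //; apply: contra w_neq0 => /eqP sum_eq0.
apply/eqP/matrixP => i j; rewrite ord1 mxE.
by have /eqP := psumr_eq0P sq_ge0 sum_eq0 (i := i) isT; rewrite !mxE -expr2 sqrf_eq0 => /eqP.
Qed.

Lemma spd_scalar1 p : spd (1%:M : 'M[R]_p).
Proof. by split=> [|v /tr_mul_self_gt0]; rewrite ?trmx1 ?mulmx1. Qed.

Lemma mulmx_full_col_rank_eq0 p q (M : 'M[R]_(p, q)) (v : 'cV[R]_q) :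
  \rank M = q -> (M *m v == 0) = (v == 0).
Proof.
move=> rkM; have freeMt : row_free M^T by rewrite /row_free mxrank_tr rkM.
by rewrite -trmx_eq0 trmx_mul (mulmx_free_eq0 _ freeMt) trmx_eq0.
Qed.

Lemma rank_full_of_trmx_mul p q r (M : 'M[R]_(p, q)) (N : 'M[R]_(p, r)) :
  \rank (M^T *m N) = q -> \rank M = q.
Proof.
move=> rkMN; apply/eqP; rewrite eqn_leq rank_leq_col /=.
by rewrite -[X in (X <= _)%N]rkMN -[\rank M]mxrank_tr mxrankM_maxl.
Qed.

Lemma trmx_mul_sym p q (A : 'M[R]_p) (W : 'M[R]_(p, q)) :
  A^T = A -> (A *m W)^T = W^T *m A.
Proof. by move=> At; rewrite trmx_mul At. Qed.

Lemma spd_congr p q (A : 'M[R]_p) (M : 'M[R]_(p, q)) :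
  spd A -> \rank M = q -> spd (M^T *m A *m M).
Proof.
move=> [At A_pos] rkM; split; first by rewrite !trmx_mul trmxK At mulmxA.
move=> v v_neq0; have Mv_neq0 : M *m v != 0 by rewrite mulmx_full_col_rank_eq0.
by have := A_pos _ Mv_neq0; rewrite !trmx_mul !mulmxA.
Qed.

Lemma spd_gram p q (M : 'M[R]_(p, q)) : \rank M = q -> spd (M^T *m M).
Proof. by move=> rkM; have := spd_congr (spd_scalar1 p) rkM; rewrite mulmx1. Qed.

Lemma spd_unit p (A : 'M[R]_p) : spd A -> A \in unitmx.
Proof.
move=> [At A_pos]; rewrite -row_free_unit; apply: inj_row_free => v vA0.
apply/eqP; apply: contraT => v_neq0.
have /A_pos : v^T != 0 by rewrite trmx_eq0.
by rewrite trmxK vA0 mul0mx mxE ltxx.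
Qed.

Lemma spd_rank p (A : 'M[R]_p) : spd A -> \rank A = p.
Proof. by move/spd_unit/mxrank_unit. Qed.

Lemma spd_invmx p (A : 'M[R]_p) : spd A -> spd (invmx A).
Proof.
move=> spdA; have uA := spd_unit spdA.
have -> : invmx A = (invmx A)^T *m A *m invmx A.
  by case: spdA => At _; rewrite trmx_inv At mulVmx ?mul1mx.
by apply: spd_congr => //; rewrite mxrank_unit ?unitmx_inv.
Qed.

Lemma quad_col p q (A : 'M[R]_p) (E : 'M[R]_(p, q)) i :
  ((col i E)^T *m A *m col i E) 0 0 = (E^T *m A *m E) i i.
Proof.
rewrite !colE trmx_mul trmx_delta -rowE !mulmxA -mulmxA -colE -row_mul !mxE.
by apply: eq_bigr => k _; rewrite !mxE.
Qed.

Lemma spd_diag_gt0 p (A : 'M[R]_p) i : spd A -> 0 < A i i.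
Proof.
move=> [_ A_pos]; have e_neq0 : col i (1%:M : 'M[R]_p) != 0.
  by apply/eqP => /matrixP /(_ i 0); rewrite !mxE eqxx => /eqP; rewrite oner_eq0.
by have := A_pos _ e_neq0; rewrite quad_col trmx1 mul1mx mulmx1.
Qed.

Lemma Anorm2_ge0 p (A : 'M[R]_p) v : spd A -> 0 <= Anorm2 A v.
Proof.
move=> [_ A_pos]; have [->|/A_pos/ltW //] := eqVneq v 0.
by rewrite /Anorm2 mulmx0 mxE.
Qed.

Lemma quad_subr p q (A : 'M[R]_p) (E D : 'M[R]_(p, q)) :
  (E - D)^T *m A *m (E - D) =
    E^T *m A *m E - E^T *m A *m D - D^T *m A *m E + D^T *m A *m D.
Proof.
rewrite mulmxBr [(E - D)^T]raddfB /= !mulmxBl opprB addrA addrAC.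
by rewrite [_ - D^T *m A *m E - _]addrAC.
Qed.

End PositiveDefinite.

Section BlockConjugateGradient.
Variables (R : realFieldType) (n m : nat) (A : 'M[R]_n) (B X0 : 'M[R]_(n, m)).

Local Notation X := (bcgX A B X0).
Local Notation Rs := (bcgR A B X0).
Local Notation P := (bcgP A B X0).
Local Notation U := (bcgUps A B X0).
Local Notation Gram j := ((Rs j)^T *m Rs j).
Local Notation PAP j := ((P j)^T *m A *m P j).

Lemma bcgX_succ j : X j.+1 = X j + P j *m U j.
Proof. by rewrite /bcgX /bcgUps /bcgP /bcgR /bcg_state iterS; case: (iter j _ _) => [[]]. Qed.

Lemma bcgR_succ j : Rs j.+1 = Rs j - A *m P j *m U j.
Proof. by rewrite /bcgX /bcgUps /bcgP /bcgR /bcg_state iterS; case: (iter j _ _) => [[]]. Qed.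

Lemma bcgP_succ j : P j.+1 = Rs j.+1 + P j *m (invmx (Gram j) *m Gram j.+1).
Proof. by rewrite /bcgX /bcgUps /bcgP /bcgR /bcg_state iterS; case: (iter j _ _) => [[]]. Qed.

Lemma bcgR_residual j : Rs j = B - A *m X j.
Proof.
elim: j => [//|j IHj].
by rewrite bcgR_succ bcgX_succ IHj mulmxDr opprD addrA mulmxA.
Qed.

Hypothesis spdA : spd A.

Lemma spd_bcgPAP j :
  \rank (Rs j) = m -> (P j)^T *m Rs j = Gram j -> spd (PAP j).
Proof.
move=> rkR PtR; apply: spd_congr => //; apply: (@rank_full_of_trmx_mul _ _ _ _ _ (Rs j)).
by rewrite PtR; apply/spd_rank/spd_gram.
Qed.

Lemma bcgP_tr_R_succ j :
  \rank (Rs j) = m -> (P j)^T *m Rs j = Gram j -> (P j)^T *m Rs j.+1 = 0.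
Proof.
move=> rkR PtR; have uG := spd_unit (spd_bcgPAP rkR PtR).
by rewrite bcgR_succ mulmxBr /bcgUps !mulmxA mulmxV ?mul1mx ?PtR ?subrr.
Qed.

Lemma bcgP_tr_R j : (forall i, (i < j)%N -> \rank (Rs i) = m) ->
  (P j)^T *m Rs j = Gram j.
Proof.
elim: j => [//|j IHj] rkR.
have PtR := IHj (fun i lt_ij => rkR i (ltnW lt_ij)).
rewrite bcgP_succ raddfD /= mulmxDl trmx_mul -mulmxA.
by rewrite bcgP_tr_R_succ ?rkR // mulmx0 addr0.
Qed.

Section OneStep.
Variable j : nat.
Hypothesis rkR : forall i, (i <= j)%N -> \rank (Rs i) = m.

Let PtR : (P j)^T *m Rs j = Gram j := bcgP_tr_R (fun i lt_ij => rkR (ltnW lt_ij)).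
Let spdG : spd (PAP j) := spd_bcgPAP (rkR (leqnn j)) PtR.
Let spdS : spd (Gram j) := spd_gram (rkR (leqnn j)).

Lemma bcgTheta_congr : bcgTheta A B X0 j = (Gram j)^T *m invmx (PAP j) *m Gram j.
Proof. by case: spdS => St _; rewrite St /bcgTheta /bcgUps !mulmxA. Qed.

Lemma spd_bcgTheta : spd (bcgTheta A B X0 j).
Proof. by rewrite bcgTheta_congr; apply: spd_congr; [apply: spd_invmx | apply: spd_rank]. Qed.

Lemma bcgErr_succ : bcgErr A B X0 j = bcgTheta A B X0 j + bcgErr A B X0 j.+1.
Proof.
have [[St _] [Gt _]] := (spdS, spdG); have [At _] := spdA.
have uG := spd_unit spdG; have uA := spd_unit spdA.
rewrite /bcgErr bcgX_succ opprD addrA; set E := bcgXsol A B - X j.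
have AE : A *m E = Rs j by rewrite mulmxBr mulmxA mulmxV // mul1mx bcgR_residual.
clearbody E.
have Ut : (U j)^T = Gram j *m invmx (PAP j) by rewrite trmx_mul trmx_inv Gt St.
have RtP : (Rs j)^T *m P j = Gram j by rewrite -St -PtR trmx_mul trmxK.
have EAD : E^T *m A *m (P j *m U j) = bcgTheta A B X0 j.
  by rewrite -trmx_mul_sym // AE mulmxA RtP.
have DAE : (P j *m U j)^T *m A *m E = bcgTheta A B X0 j.
  by rewrite trmx_mul -!mulmxA AE PtR Ut bcgTheta_congr St !mulmxA.
have DAD : (P j *m U j)^T *m A *m (P j *m U j) = bcgTheta A B X0 j.
  have -> : (P j *m U j)^T *m A *m (P j *m U j) = (U j)^T *m PAP j *m U j.
    by rewrite trmx_mul !mulmxA.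
  by rewrite Ut mulmxKV.
by rewrite quad_subr EAD DAE DAD subrK addrC subrK.
Qed.

End OneStep.
End BlockConjugateGradient.

Lemma Anorm2_col_sub (R : realFieldType) n m (A : 'M[R]_n) (E F : 'M[R]_(n, m)) i :
  Anorm2 A (col i E - col i F) = ((E - F)^T *m A *m (E - F)) i i.
Proof. by rewrite -linearB /= /Anorm2 quad_col. Qed.

Theorem theorem1 (R : realFieldType) (n m : nat) (A : 'M[R]_n)
  (B X0 : 'M[R]_(n, m)) (k : nat) :
  spd A ->
  (1 <= k)%N ->
  (forall j : nat, (j < k)%N -> \rank (bcgR A B X0 j) = m) ->
  [/\ bcgErr A B X0 k.-1 = bcgTheta A B X0 k.-1 + bcgErr A B X0 k,
      spd (bcgTheta A B X0 k.-1)
    & forall i : 'I_m,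
        Anorm2 A (col i (bcgXsol A B) - col i (bcgX A B X0 k.-1))
          = bcgTheta A B X0 k.-1 i i
            + Anorm2 A (col i (bcgXsol A B) - col i (bcgX A B X0 k))
        /\ bcgTheta A B X0 k.-1 i i
             <= Anorm2 A (col i (bcgXsol A B) - col i (bcgX A B X0 k.-1))
        /\ 0 < bcgTheta A B X0 k.-1 i i].
Proof.
move=> spdA; case: k => [//|j] _ rkR /=.
have errE := bcgErr_succ spdA rkR; have spdT := spd_bcgTheta spdA rkR.
have errA i l : Anorm2 A (col i (bcgXsol A B) - col i (bcgX A B X0 l)) = bcgErr A B X0 l i i.
  exact: Anorm2_col_sub.
split=> // i; rewrite !errA errE mxE lerDl -errA Anorm2_ge0 //.
by split=> //; split=> //; apply: spd_diag_gt0.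
Qed.
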